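(* For integers $N\ge 2$ and $n\ge 1$, $$B_{N,n}=\frac{N}{N+n}\left\{B_{N-1,n}+\sum_{m=1}^{n-1}\binom{n}{n-m+1}B_{N,m}B_{N-1,n-m+1}\right\}.$$
   Context: For a positive integer $N$, the hypergeometric Bernoulli numbers $B_{N,n}$ ($n\ge 0$) are defined by $$\frac{x^N/N!}{e^x-\sum_{n=0}^{N-1}x^n/n!}=\sum_{n=0}^\infty B_{N,n}\frac{x^n}{n!}.$$ *)

From mathcomp Require Import all_boot all_order all_algebra.
Set Implicit Arguments. Unset Strict Implicit. Unset Printing Implicit Defensive.
Import Order.TTheory GRing.Theory Num.Theory.
Local Open Scope ring_scope.

(* Coefficient of x^i in  e^x - \sum_{n=0}^{N-1} x^n/n!. *)
Definition hg_denom_coef (N i : nat) : rat :=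
  (i`!%:R)^-1 - (if (i < N)%N then (i`!%:R)^-1 else 0).

Definition hg_num_coef (N m : nat) : rat := (m == N)%:R / (N`!%:R).

(* [is_hgBernoulli B] : for every N >= 1, the formal power series identity
     x^N/N! = (e^x - \sum_{n<N} x^n/n!) * \sum_n B N n x^n/n!
   holds coefficientwise, i.e. B N n are the hypergeometric Bernoulli
   numbers B_{N,n} (they are uniquely determined by this identity). *)
Definition is_hgBernoulli (B : nat -> nat -> rat) : Prop :=
  forall N : nat, (1 <= N)%N ->
    forall m : nat,
      \sum_(i < m.+1) hg_denom_coef N i * (B N (m - i)%N / ((m - i)`!)%:R)
      = hg_num_coef N m.

From mathcomp Require Import all_boot all_order all_algebra ring zify.
Import Order.TTheory GRing.Theory Num.Theory.
Local Open Scope ring_scope.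
Set Implicit Arguments. Unset Strict Implicit.

(* With G_N = \sum_n B_{N,n} x^n/n! and f_N = \sum_i x^i/(N+i)!, the definition
   reads G_N f_N = 1/N!.  The tails satisfy f_{N-1} = 1/(N-1)! + x f_N and
   N f_N + x f_N' = f_{N-1}; eliminating them gives
   G_N - G_{N-1} = G_N' (G_{N-1} - 1), whose coefficient of x^n is the
   recurrence once B_{N-1,0} = 1 and B_{N-1,1} = -1/N are inserted.  All series
   are truncated to polynomials, and the identities hold modulo a power of x. *)

Lemma natr_fact_neq0 (R : numDomainType) n : n`!%:R != 0 :> R.
Proof. by rewrite pnatr_eq0 -lt0n fact_gt0. Qed.

Section TruncatedSeries.
Variable R : fieldType.
Implicit Types p q : {poly R}.

Lemma dvdp_XnP n p : reflect (forall i, (i < n)%N -> p`_i = 0) ('X ^+ n %| p).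
Proof.
apply: (iffP idP) => [/dvdpP[q ->] i lt_in | p_lo].
  by rewrite coefMXn lt_in.
have take0 : take_poly n p = 0.
  by apply/polyP => i; rewrite coef_take_poly coef0; case: ifP => // /p_lo.
by rewrite -(poly_take_drop n p) take0 add0r dvdp_mull.
Qed.

Lemma dvdp_Xn_deriv n p : 'X ^+ n.+1 %| p -> 'X ^+ n %| p^`().
Proof.
case/dvdpP=> q ->; rewrite derivM derivXn /= exprS mulrA.
rewrite dvdp_add ?(dvdp_mull _ (dvdpp _)) //.
by rewrite dvdp_mull // -mulr_natr dvdp_mulr.
Qed.

Lemma dvdp_Xn_cancel n p q : q`_0 != 0 -> ('X ^+ n %| p * q) = ('X ^+ n %| p).
Proof.
move=> q0; apply: Gauss_dvdpl; apply: coprimep_expl.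
by have := coprimep_XsubC q 0; rewrite subr0 rootE horner_coef0 q0 coprimep_sym.
Qed.

Lemma dvdp_Xn_recip_ode K (G C f e : {poly R}) (a g0 c0 : R) :
  f`_0 != 0 -> e`_0 != 0 -> a * g0 = c0 ->
  'X ^+ K.+1 %| G * f - g0%:P ->
  'X ^+ K.+1 %| C * e - c0%:P ->
  'X ^+ K.+1 %| e - (c0%:P + 'X * f) ->
  'X ^+ K.+1 %| a%:P * f + 'X * f^`() - e ->
  'X ^+ K %| G - C - G^`() * (C - 1).
Proof.
move=> f0 e0 <- {c0} dG dC de df.
have weak p : 'X ^+ K.+1 %| p -> 'X ^+ K %| p.
  exact/dvdp_trans/dvdp_exp2l/leqnSn.
have dG' : 'X ^+ K %| G^`() * f + G * f^`().
  by have := dvdp_Xn_deriv dG; rewrite derivB derivC subr0 derivM.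
move: dG dC de df => /weak dG /weak dC /weak de /weak df.
rewrite -(dvdp_Xn_cancel _ _ e0) -(dvdp_Xn_cancel _ _ f0).
have -> : (G - C - G^`() * (C - 1)) * e * f =
    (G * f - g0%:P) * e - (C * e - (a * g0)%:P) * f
    - G^`() * f * (C * e - (a * g0)%:P) + G^`() * f * (e - ((a * g0)%:P + 'X * f))
    + 'X * f * (G^`() * f + G * f^`()) - 'X * f^`() * (G * f - g0%:P)
    - g0%:P * (a%:P * f + 'X * f^`() - e).
  by rewrite polyCM; ring.
do ?apply: dvdp_add; rewrite ?dvdpNr.
all: by [apply: dvdp_mulr | apply: dvdp_mull].
Qed.

Lemma coef_recip_ode_defect (b c : nat -> R) L n :
  c 0 = 1 -> (0 < n)%N -> (n < L)%N ->
  let G := \poly_(i < L) b i in let C := \poly_(i < L) c i in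
  (G - C - G^`() * (C - 1))`_n =
  b n - c n - (b n *+ n) * c 1 - \sum_(1 <= m < n) (b m *+ m) * c (n - m + 1)%N.
Proof.
case: n => // n c0 _ lt_nL /=.
have coefL (f : nat -> R) i : (i < L)%N -> (\poly_(j < L) f j)`_i = f i.
  by rewrite coef_poly => ->.
have coefC1 i : (i < L)%N -> (\poly_(i < L) c i - 1)`_i = c i - (i == 0)%:R.
  by move=> lt_iL; rewrite coefB coef1 coefL.
have lt1L : (1 < L)%N := leq_ltn_trans (ltn0Sn n) lt_nL.
rewrite !coefB !coefL // coefM big_ord_recr /= subnn coefC1 ?(ltnW lt1L) // c0.
rewrite subrr mulr0 addr0 big_ord_recr /= subSnn coefC1 // subr0 coef_deriv coefL //.
rewrite opprD addrA addrAC; congr (_ - _).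
rewrite big_add1 big_mkord; apply: eq_bigr => j _.
have lt_jn := ltn_ord j.
have -> : (n.+1 - j.+1 + 1 = n.+1 - j)%N by lia.
rewrite coef_deriv coefL ?coefC1; try lia.
by rewrite (_ : n.+1 - j == 0 = false)%N ?subr0 //; lia.
Qed.

Definition egf_trunc (a : nat -> R) L : {poly R} := \poly_(i < L) (a i / i`!%:R).

End TruncatedSeries.

Section FactorialSeries.
Variable R : numFieldType.

Lemma natr_bin_sub_fact n j : (j <= n)%N ->
  'C(n, n - j)%:R = n`!%:R * j.+1%:R / (j.+1`!%:R * (n - j)`!%:R) :> R.
Proof.
move=> le_jn; apply: (canRL (mulfK _)); first by rewrite mulf_neq0 ?natr_fact_neq0.
by rewrite -!natrM bin_sub // factS -mulnA mulnCA bin_fact // mulnC.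
Qed.

Lemma sum_bin_egf (x y : nat -> R) n :
  \sum_(1 <= m < n) 'C(n, n - m + 1)%:R * x m * y (n - m + 1)%N =
  n`!%:R * \sum_(1 <= m < n)
             (x m / m`!%:R *+ m) * (y (n - m + 1)%N / (n - m + 1)`!%:R).
Proof.
rewrite mulr_sumr; apply: eq_big_nat => -[//|j] /andP[_ lt_jn].
have -> : (n - j.+1 + 1 = n - j)%N by lia.
rewrite natr_bin_sub_fact; last by rewrite ltnW // ltnW.
by rewrite -[_ *+ j.+1]mulr_natr; field; rewrite !natr_fact_neq0.
Qed.

(* The truncation of (e^x - \sum_(n < M) x^n/n!) / x^M. *)
Definition exp_tail M L : {poly R} := \poly_(i < L) ((M + i)`!%:R)^-1.

Lemma exp_tail_coef0 M L : (0 < L)%N -> (exp_tail M L)`_0 != 0.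
Proof. by move=> L_gt0; rewrite coef_poly L_gt0 invr_eq0 natr_fact_neq0. Qed.

Lemma exp_tail_succ M L :
  'X ^+ L %| exp_tail M L - ((M`!%:R)^-1%:P + 'X * exp_tail M.+1 L).
Proof.
apply/dvdp_XnP => -[|i] lt_iL; rewrite !coefB coefD coefC coefXM !coef_poly lt_iL /=.
  by rewrite addn0 addr0 subrr.
by rewrite (ltnW lt_iL) addnS add0r subrr.
Qed.

Lemma exp_tail_ode M L :
  'X ^+ L %| M.+1%:R%:P * exp_tail M.+1 L + 'X * (exp_tail M.+1 L)^`() - exp_tail M L.
Proof.
apply/dvdp_XnP => i lt_iL.
have Xderiv : ('X * (exp_tail M.+1 L)^`())`_i = (exp_tail M.+1 L)`_i *+ i.
  by case: i {lt_iL} => [|i]; rewrite coefXM /= ?coef_deriv ?mulr0n.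
rewrite coefB coefD coefCM Xderiv !coef_poly lt_iL addSnnS addnS factS natrM.
rewrite -mulr_natr -addn1 !natrD; field.
by rewrite natr_fact_neq0 -natrD addrC natr1 pnatr_eq0.
Qed.

End FactorialSeries.

Section HypergeometricBernoulli.
Variable B : nat -> nat -> rat.
Hypothesis hB : is_hgBernoulli B.

Lemma coef_hgBernoulli_egf_tail M L i : (0 < M)%N -> (i < L)%N ->
  (egf_trunc (B M) L * exp_tail _ M L)`_i = (i == 0)%:R / M`!%:R.
Proof.
move=> M_gt0 lt_iL; have := hB M_gt0 (M + i).
rewrite -addnS big_split_ord /= big1 ?add0r; last first.
  by move=> j _; rewrite /hg_denom_coef ltn_ord subrr mul0r.
have -> : hg_num_coef M (M + i) = (i == 0)%:R / M`!%:R.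
  by rewrite /hg_num_coef -{2}[M]addn0 eqn_add2l.
move=> <-; rewrite coefMr; apply: eq_bigr => j _.
have le_ji : (j <= i)%N by rewrite -ltnS.
rewrite /hg_denom_coef ltnNge leq_addr subr0 !coef_poly subnDl mulrC.
by rewrite (leq_ltn_trans (leq_subr j i) lt_iL) (leq_ltn_trans le_ji lt_iL).
Qed.

Lemma hgBernoulli_egf_tail M L : (0 < M)%N ->
  'X ^+ L %| egf_trunc (B M) L * exp_tail _ M L - ((M`!%:R)^-1)%:P.
Proof.
move=> M_gt0; apply/dvdp_XnP => i lt_iL.
rewrite coefB coef_hgBernoulli_egf_tail // coefC.
by case: (i == 0); rewrite ?mul1r ?mul0r subrr.
Qed.

Lemma hgBernoulli0 M : (0 < M)%N -> B M 0 = 1.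
Proof.
move=> M_gt0; have := coef_hgBernoulli_egf_tail M_gt0 (ltnSn 0).
rewrite coefM big_ord1 !coef_poly /= addn0 fact0 divr1 mul1r -[X in _ = X]mul1r.
by apply/mulIf; rewrite invr_eq0 natr_fact_neq0.
Qed.

Lemma hgBernoulli1 M : (0 < M)%N -> B M 1 = - (M.+1%:R)^-1.
Proof.
move=> M_gt0; have := coef_hgBernoulli_egf_tail M_gt0 (ltnSn 1).
rewrite coefM big_ord_recr big_ord1 /= !coef_poly /= addn0 addn1 hgBernoulli0 //.
rewrite mul0r fact0 factS mulr1 !divr1 natrM.
move=> /(canRL (addKr _)) h; rewrite -[B M 1](divfK (natr_fact_neq0 _ M)) h.
by field; rewrite natr_fact_neq0 addrC natr1 pnatr_eq0.
Qed.

Lemma hgBernoulli_egf_ode M K : (0 < M)%N ->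
  let G := egf_trunc (B M.+1) K.+1 in let C := egf_trunc (B M) K.+1 in
  'X ^+ K %| G - C - G^`() * (C - 1).
Proof.
move=> M_gt0 /=.
have recip_step : M.+1%:R * (M.+1`!%:R)^-1 = (M`!%:R)^-1 :> rat.
  by rewrite [M.+1`!]factS natrM invfM mulrA divff ?mul1r // pnatr_eq0.
apply: (dvdp_Xn_recip_ode (exp_tail_coef0 _ M.+1 (ltn0Sn K))
  (exp_tail_coef0 _ M (ltn0Sn K)) recip_step).
- exact: hgBernoulli_egf_tail.
- exact: hgBernoulli_egf_tail.
- exact: exp_tail_succ.
- exact: exp_tail_ode.
Qed.

End HypergeometricBernoulli.

Theorem lemma2 (B : nat -> nat -> rat) (hB : is_hgBernoulli B)
  (N n : nat) (hN : (2 <= N)%N) (hn : (1 <= n)%N) :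
  B N n = N%:R / (N + n)%:R *
    (B N.-1 n +
     \sum_(1 <= m < n) 'C(n, n - m + 1)%:R * B N m * B N.-1 (n - m + 1)%N).
Proof.
case: N hN => [|[|M]] // _ /=.
have c0 : B M.+1 0 / 0`!%:R = 1 by rewrite hgBernoulli0 // fact0 divr1.
have /dvdp_XnP/(_ n (ltnSn n)) := hgBernoulli_egf_ode hB n.+1 (ltn0Sn M).
rewrite (@coef_recip_ode_defect _ _ (fun i => B M.+1 i / i`!%:R) _ _ c0 hn (leqW (ltnSn n))).
move=> /subr0_eq defect.
rewrite sum_bin_egf -defect hgBernoulli1 // -[_ *+ n]mulr_natr.
rewrite (_ : 1`! = 1)%N // divr1.
by field; rewrite natr_fact_neq0 -!natrD !pnatr_eq0.
Qed.
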